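(* Let $n\ge1$, $r\ge0$ and $0\le k\le n$. Then $\kappa\,d\,\mathcal{J}_r\Lambda^k(\mathbb{R}^n)=\mathcal{J}_r\Lambda^k(\mathbb{R}^n)$.
   Context: For a multi-index $\alpha\in\mathbb{N}^n$ and $\sigma=\{\sigma(1)<\dots<\sigma(k)\}\subset\{1,\dots,n\}$, the form monomial is $x^\alpha dx_\sigma:=x_1^{\alpha_1}\cdots x_n^{\alpha_n}\,dx_{\sigma(1)}\wedge\cdots\wedge dx_{\sigma(k)}$. $\mathcal{H}_r\Lambda^k(\mathbb{R}^n)$ is the span of form monomials with $|\alpha|=r$, $|\sigma|=k$. $d$ is the exterior derivative. The Koszul operator is $\kappa(x^\alpha dx_\sigma)=\sum_{i=1}^k(-1)^{i+1}x^\alpha x_{\sigma(i)}\,dx_{\sigma(1)}\wedge\cdots\wedge\widehat{dx_{\sigma(i)}}\wedge\cdots\wedge dx_{\sigma(k)}$, extended linearly. The linear degree is $\mathrm{ldeg}(x^\alpha dx_\sigma):=\#\{i\notin\sigma:\alpha_i=1\}$; $\mathcal{H}_{r,l}\Lambda^k$ is the span of form monomials in $\mathcal{H}_r\Lambda^k$ with linear degree $\ge l$; and $\mathcal{J}_r\Lambda^k(\mathbb{R}^n):=\sum_{l\ge1}\kappa\,\mathcal{H}_{r+l-1,l}\Lambda^{k+1}(\mathbb{R}^n)$ (with $\Lambda^{n+1}=0$). *)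

From HB Require Import structures.
From mathcomp Require Import all_boot all_order all_algebra.
Set Implicit Arguments. Unset Strict Implicit. Unset Printing Implicit Defensive.
Import Order.TTheory GRing.Theory Num.Theory.
Local Open Scope ring_scope.

(* A (polynomial) differential form: coefficient of x^alpha dx_sigma,
   for alpha a multi-index in N^n and sigma a subset of {1..n}
   (increasingly ordered, as in the paper). *)
Definition pform (R : Type) (n : nat) := n.-tuple nat -> {set 'I_n} -> R.

Definition incr n (a : n.-tuple nat) (j : 'I_n) : n.-tuple nat :=
  [tuple (tnth a i + (i == j))%N | i < n].
Definition decr n (a : n.-tuple nat) (j : 'I_n) : n.-tuple nat :=
  [tuple (tnth a i - (i == j))%N | i < n].

Definition sgn (R : pzRingType) n (s : {set 'I_n}) (j : 'I_n) : R :=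
  (-1) ^+ #|[set m in s | (m < j)%N]|.

(* Koszul operator, linear extension of
   kappa(x^a dx_sigma) = sum_i (-1)^(i+1) x^a x_{sigma(i)} dx_{sigma \ sigma(i)},
   written coefficientwise. *)
Definition koszul (R : pzRingType) n (w : pform R n) : pform R n :=
  fun b t => \sum_(j < n | (j \notin t) && (0 < tnth b j)%N)
               sgn R t j * w (decr b j) (j |: t).

(* Exterior derivative, linear extension of
   d(x^a dx_sigma) = sum_j a_j x^(a - e_j) dx_j /\ dx_sigma, coefficientwise. *)
Definition extd (R : pzRingType) n (w : pform R n) : pform R n :=
  fun b t => \sum_(j < n | j \in t)
               sgn R t j * (tnth b j).+1%:R * w (incr b j) (t :\ j).

Definition ldeg n (a : n.-tuple nat) (s : {set 'I_n}) : nat :=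
  #|[set i | (i \notin s) && (tnth a i == 1%N)]|.

(* H_{r,l} Lambda^k : span of form monomials with |a| = r, |sigma| = k,
   ldeg >= l, i.e. forms whose coefficients vanish off these monomials. *)
Definition Hrl (R : pzRingType) n (r l k : nat) (w : pform R n) : Prop :=
  forall a s, w a s != 0 ->
    [&& sumn a == r, #|s| == k & (l <= ldeg a s)%N].

(* J_r Lambda^k = sum_{l >= 1} kappa H_{r+l-1,l} Lambda^{k+1}  (a sum of
   subspaces: finite sums of elements of the summands). *)
Definition Jr (R : pzRingType) n (r k : nat) (w : pform R n) : Prop :=
  exists (L : nat) (eta : nat -> pform R n),
    (forall l, (1 <= l)%N -> Hrl (r + l - 1) l k.+1 (eta l)) /\
    w = (fun b t => \sum_(1 <= l < L) koszul (eta l) b t).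

From HB Require Import structures.
From mathcomp Require Import all_boot all_order all_algebra ring.
From Stdlib Require Import FunctionalExtensionality.
Import GRing.Theory Num.Theory.
Set Implicit Arguments. Unset Strict Implicit. Unset Printing Implicit Defensive.
Local Open Scope ring_scope.

(* The Koszul operator and the exterior derivative satisfy the homotopy formula
   [d kappa + kappa d = r + k] on forms with polynomial degree r and form degree k.
   Since [kappa kappa = 0], it follows that [kappa d kappa eta = (r + k) kappa eta]
   for every eta in H_r Lambda^k.  On the summand [kappa H_{r+l-1,l} Lambda^{k+1}]
   of J_r Lambda^k, kappa d is therefore multiplication by [r + l + k], which is
   nonzero for [l >= 1]; so kappa d maps J_r Lambda^k into and onto itself. *)

Section MultiIndex.
Variable n : nat.
Implicit Types (a : n.-tuple nat) (i j : 'I_n).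

Lemma tnth_incr a j i : tnth (incr a j) i = (tnth a i + (i == j))%N.
Proof. by rewrite tnth_mktuple. Qed.

Lemma tnth_decr a j i : tnth (decr a j) i = (tnth a i - (i == j))%N.
Proof. by rewrite tnth_mktuple. Qed.

Lemma incrK j : cancel (@incr n ^~ j) (@decr n ^~ j).
Proof.
move=> a; apply: eq_from_tnth => i; rewrite tnth_decr tnth_incr.
by case: (i == j); rewrite ?addnK ?addn0 ?subn0.
Qed.

Lemma decrK a j : (0 < tnth a j)%N -> incr (decr a j) j = a.
Proof.
move=> a_j; apply: eq_from_tnth => i; rewrite tnth_incr tnth_decr.
by have [->|_] := eqVneq i j; rewrite ?subnK ?subn0 ?addn0.
Qed.

Lemma decrC a i j : decr (decr a i) j = decr (decr a j) i.
Proof. by apply: eq_from_tnth => m; rewrite !tnth_decr subnAC. Qed.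

Lemma decr_incrC a i j : i != j -> decr (incr a j) i = incr (decr a i) j.
Proof.
move=> ij; apply: eq_from_tnth => m; rewrite !(tnth_incr, tnth_decr).
by have [->|_] := eqVneq m i; rewrite ?(negPf ij) ?addn0 ?subn0.
Qed.

End MultiIndex.

Section Sign.
Variables (R : pzRingType) (n : nat).
Implicit Types (t : {set 'I_n}) (i j : 'I_n).

Lemma sgnD1 t i j :
  sgn R (t :\ j) i = (if (j \in t) && (j < i)%N then -1 else 1) * sgn R t i.
Proof.
rewrite /sgn (cardsD1 j [set m in t | (m < i)%N]) !inE.
have -> : [set m in t :\ j | (m < i)%N] = [set m in t | (m < i)%N] :\ j.
  by apply/setP => m; rewrite !inE andbA.
case: ((j \in t) && (j < i)%N); last by rewrite mul1r add0n.
by rewrite add1n exprS mulrA mulrNN !mul1r.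
Qed.

Lemma sgnU1 t i j :
  sgn R (j |: t) i = (if (j \notin t) && (j < i)%N then -1 else 1) * sgn R t i.
Proof.
rewrite /sgn; case ji: (j < i)%N.
  have -> : [set m in j |: t | (m < i)%N] = j |: [set m in t | (m < i)%N].
    apply/setP => m; rewrite !inE.
    by have [->|/negPf mj] := eqVneq m j; rewrite ?ji ?mj.
  rewrite cardsU1 !inE ji andbT.
  by case: (j \notin t); rewrite ?add1n ?exprS ?mulrA ?mulrNN ?mul1r.
have -> : [set m in j |: t | (m < i)%N] = [set m in t | (m < i)%N].
  apply/setP => m; rewrite !inE.
  by have [->|/negPf mj] := eqVneq m j; rewrite ?ji ?andbF ?mj.
by rewrite andbF mul1r.
Qed.

Lemma sgnD1_id t j : sgn R (t :\ j) j = sgn R t j.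
Proof. by rewrite sgnD1 ltnn andbF mul1r. Qed.

Lemma sgnU1_id t j : sgn R (j |: t) j = sgn R t j.
Proof. by rewrite sgnU1 ltnn andbF mul1r. Qed.

Lemma sgnK t j : sgn R t j * sgn R t j = 1.
Proof. by rewrite /sgn -exprD addnn -mul2n exprM sqrrN !expr1n. Qed.

End Sign.

Lemma sum_antisym_eq0 (V : zmodType) n (F : 'I_n -> 'I_n -> V) :
  (forall i, F i i = 0) -> (forall i j, F j i = - F i j) ->
  \sum_(i < n) \sum_(j < n) F i j = 0.
Proof.
move=> F0 FN; rewrite pair_big /= (bigID (fun p : 'I_n * 'I_n => p.1 < p.2)%N) /=.
rewrite [X in _ + X](bigID (fun p : 'I_n * 'I_n => p.2 < p.1)%N) /=.
rewrite [X in _ + (_ + X)]big1 ?addr0; last first.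
  by move=> [i j] /=; case: (ltngtP i j) => // /val_inj ->; rewrite F0.
rewrite [X in _ + X](reindex_inj (inv_inj (@swap_pairK _ _))) /=.
rewrite [X in _ + X](eq_bigl (fun p : 'I_n * 'I_n => p.1 < p.2)%N); last first.
  by move=> [i j] /=; case: ltngtP.
by rewrite -big_split big1 // => [[i j]] _ /=; rewrite (FN i j) addrN.
Qed.

Lemma big_mulr_sum_mkcond (R : pzSemiRingType) n (P : pred 'I_n)
    (Q : 'I_n -> pred 'I_n) (c : 'I_n -> R) (F : 'I_n -> 'I_n -> R) :
  \sum_(j < n | P j) c j * \sum_(i < n | Q j i) F j i =
  \sum_(j < n) \sum_(i < n) (if P j && Q j i then c j * F j i else 0).
Proof.
rewrite big_mkcond; apply: eq_bigr => j _; case: (P j); last by rewrite big1.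
by rewrite mulr_sumr big_mkcond; apply: eq_bigr => i _; case: (Q j i).
Qed.

Section Forms.
Variables (R : comRingType) (n : nat).
Implicit Types (w e : pform R n) (b : n.-tuple nat) (t : {set 'I_n}).

Definition scale_form (c : R) w : pform R n := fun a s => c * w a s.

Lemma koszulZ c w b t : koszul (scale_form c w) b t = c * koszul w b t.
Proof. by rewrite mulr_sumr; apply: eq_bigr => j _; rewrite /scale_form; ring. Qed.

Lemma koszulB w1 w2 b t :
  koszul (fun a s => w1 a s - w2 a s) b t = koszul w1 b t - koszul w2 b t.
Proof. by rewrite -sumrB; apply: eq_bigr => j _; rewrite mulrBr. Qed.

Lemma koszul_sum (I : Type) (r : seq I) (F : I -> pform R n) :
  koszul (fun a s => \sum_(l <- r) F l a s) =
  (fun b t => \sum_(l <- r) koszul (F l) b t).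
Proof.
do 2!apply: functional_extensionality => ?.
by rewrite /koszul; under eq_bigr do rewrite mulr_sumr; exact: exchange_big.
Qed.

Lemma extd_sum (I : Type) (r : seq I) (F : I -> pform R n) :
  extd (fun a s => \sum_(l <- r) F l a s) =
  (fun b t => \sum_(l <- r) extd (F l) b t).
Proof.
do 2!apply: functional_extensionality => ?.
by rewrite /extd; under eq_bigr do rewrite mulr_sumr; exact: exchange_big.
Qed.

Lemma Hrl_scale c N l K w : Hrl N l K w -> Hrl N l K (scale_form c w).
Proof.
move=> hw a s ne0; apply: hw; apply: contraNneq ne0.
by rewrite /scale_form => ->; rewrite mulr0.
Qed.

Lemma koszul_koszul w b t : koszul (koszul w) b t = 0.
Proof.
rewrite /koszul big_mulr_sum_mkcond; apply: sum_antisym_eq0 => [j|i j].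
  by rewrite setU11 andbF.
have [->|ji] := eqVneq j i; first by rewrite setU11 andbF oppr0.
have ij : i != j by rewrite eq_sym.
rewrite !inE !tnth_decr (negPf ij) (negPf ji) !subn0 /=.
case jt: (j \in t); case it: (i \in t);
  case: (0 < tnth b i)%N; case: (0 < tnth b j)%N => /=; rewrite ?oppr0 //.
rewrite decrC (setUCA [set i]) !sgnU1 jt it /=.
by case: (ltngtP j i) => [_|_|/val_inj eq_ji]; [ring | ring | rewrite eq_ji eqxx in ji].
Qed.

Lemma koszul_extd_homotopy w b t :
  extd (koszul w) b t + koszul (extd w) b t = (sumn b + #|t|)%:R * w b t.
Proof.
have -> : (sumn b + #|t|)%:R * w b t =
    \sum_(j < n) (tnth b j + (j \in t))%:R * w b t.
  rewrite -mulr_suml -natr_sum big_split /= sumnE big_tuple -sum1_card.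
  rewrite [X in (_ + X)%N]big_mkcond; congr ((_ + _)%:R * _);
    by apply: eq_bigr => i _; case: (i \in t).
(* The [j]-th terms of [d kappa] and [kappa d] give [(b_j + [j \in t]) w b t];
   the mixed terms cancel in pairs. *)
rewrite /extd /koszul !big_mulr_sum_mkcond [X in _ + X]exchange_big -big_split /=.
apply: eq_bigr => j _; rewrite -big_split /= (bigD1 j) //= big1 ?addr0.
  rewrite !inE eqxx tnth_incr eqxx addn1 /=.
  case jt: (j \in t) => /=.
    by rewrite incrK setD1K // sgnD1_id addr0 addn1 mulrACA sgnK mul1r.
  rewrite add0r addn0 andbT.
  have [b_j0|b_j] := posnP (tnth b j); first by rewrite b_j0 mul0r.
  rewrite sgnU1_id tnth_decr eqxx subn1 prednK // decrK // setU1K ?jt //.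
  by rewrite !mulrA sgnK mul1r.
move=> i ij; have ji : j != i by rewrite eq_sym.
rewrite !inE tnth_incr (negPf ij) addn0 tnth_decr (negPf ji) subn0 /=.
case jt: (j \in t); case it: (i \in t); case: (0 < tnth b i)%N => /=;
  rewrite ?addr0 ?add0r //.
have -> : i |: t :\ j = (i |: t) :\ j.
  by apply/setP => m; rewrite !inE; have [->|] := eqVneq m i; rewrite ?eqxx ?ij.
rewrite decr_incrC // sgnD1 sgnU1 jt it /=.
by case: (ltngtP j i) => [_|_|/val_inj eq_ji]; [ring | ring | rewrite eq_ji eqxx in ji].
Qed.

Lemma koszul_extd_koszul N l K e : Hrl N l K e ->
  koszul (extd (koszul e)) = scale_form (N + K)%:R (koszul e).
Proof.
move=> he; have -> : extd (koszul e) =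
    (fun a s => scale_form (N + K)%:R e a s - koszul (extd e) a s).
  apply: functional_extensionality => a; apply: functional_extensionality => s.
  apply/eqP; rewrite eq_sym subr_eq koszul_extd_homotopy /scale_form.
  by have [->|/he/and3P[/eqP-> /eqP-> _]] := eqVneq (e a s) 0; rewrite ?mulr0.
do 2!apply: functional_extensionality => ?.
by rewrite koszulB koszulZ koszul_koszul subr0.
Qed.

Lemma koszul_extd_sum_koszul r k L (eta : nat -> pform R n) :
  (forall l, (1 <= l)%N -> Hrl (r + l - 1) l k.+1 (eta l)) ->
  koszul (extd (fun b t => \sum_(1 <= l < L) koszul (eta l) b t)) =
  (fun b t => \sum_(1 <= l < L) koszul (scale_form (r + l + k)%:R (eta l)) b t).
Proof.
move=> he; rewrite (extd_sum _ (fun l => koszul (eta l))).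
rewrite (koszul_sum _ (fun l => extd (koszul (eta l)))).
do 2!apply: functional_extensionality => ?.
apply: eq_big_nat => l /andP[l_gt0 _].
rewrite (koszul_extd_koszul (he l l_gt0)) koszulZ /scale_form.
by rewrite addnS -addSn subn1 prednK ?addn_gt0 ?l_gt0 ?orbT.
Qed.

End Forms.

Theorem mainTheorem12 (R : realFieldType) (n r k : nat)
  (hn : (1 <= n)%N) (hk : (k <= n)%N) :
  (forall w : pform R n, Jr r k w -> Jr r k (koszul (extd w))) /\
  (forall w : pform R n, Jr r k w ->
     exists v : pform R n, Jr r k v /\ koszul (extd v) = w).
Proof.
split=> _ [L [eta [he ->]]].
  rewrite (koszul_extd_sum_koszul L he).
  by exists L, (fun l => scale_form (r + l + k)%:R (eta l)); split=> // l /he/Hrl_scale.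
pose eta' l := scale_form (r + l + k)%:R^-1 (eta l).
have he' l : (1 <= l)%N -> Hrl (r + l - 1) l k.+1 (eta' l).
  by move=> /he; apply: Hrl_scale.
exists (fun b t => \sum_(1 <= l < L) koszul (eta' l) b t); split; first by exists L, eta'.
rewrite (koszul_extd_sum_koszul L he').
apply: functional_extensionality => b; apply: functional_extensionality => t.
apply: eq_big_nat => l /andP[l_gt0 _]; congr koszul.
apply: functional_extensionality => a; apply: functional_extensionality => s.
by rewrite /eta' /scale_form mulVKf // pnatr_eq0 -lt0n !addn_gt0 l_gt0 orbT.
Qed.
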